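(* Let $\alpha > 5/6$ and $c > 0$ be fixed constants, and let $p = n^{-\alpha}$. Let $G \sim G(n,p)$. Then the probability that every set of at most $c\sqrt{n}$ vertices of $G$ induces a $3$-colorable subgraph of $G$ tends to $1$ as $n \to \infty$.
   Context: $G(n,p)$ denotes the random graph on $n$ labelled vertices in which each of the $\binom{n}{2}$ pairs of vertices is an edge independently with probability $p$. A graph is $3$-colorable if its vertices can be colored with $3$ colors so that no two adjacent vertices receive the same color. *)

From HB Require Import structures.
From mathcomp Require Import all_boot all_order all_algebra.
From mathcomp Require Import all_classical all_reals all_analysis.
Set Implicit Arguments. Unset Strict Implicit. Unset Printing Implicit Defensive.
Import Order.TTheory GRing.Theory Num.Theory.
Local Open Scope ring_scope.

Definition pairs (n : nat) : {set {set 'I_n}} := [set e : {set 'I_n} | #|e| == 2%N].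

(* A (labelled simple) graph on 'I_n is an edge set E \subset pairs n. *)

(* Probability, in G(n,p), of the graph property P (a predicate on edge sets):
   each pair is an edge independently with probability p. *)
Definition gnp_prob (R : realType) (n : nat) (p : R)
    (P : {set {set 'I_n}} -> bool) : R :=
  \sum_(E in powerset (pairs n) | P E)
     p ^+ #|E| * (1 - p) ^+ (#|pairs n| - #|E|).

Definition induced_3colorable (n : nat) (E : {set {set 'I_n}}) (S : {set 'I_n}) : bool :=
  [exists f : {ffun 'I_n -> 'I_3},
     [forall u in S, forall v in S, ([set u; v] \in E) ==> (f u != f v)]].

Definition small_sets_3colorable (R : realType) (c : R) (n : nat)
    (E : {set {set 'I_n}}) : bool :=
  [forall S : {set 'I_n},
     ((#|S|%:R : R) <= c * Num.sqrt (n%:R)) ==> induced_3colorable E S].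

From HB Require Import structures.
From mathcomp Require Import all_boot all_order all_algebra.
From mathcomp Require Import all_classical all_reals all_analysis.
From mathcomp Require Import ring lra zify.
(* Re-imported so that the finset lemma names shadow those of classical_sets. *)
From mathcomp Require Import fintype finset.
Import Order.TTheory GRing.Theory Num.Theory.
Import numFieldNormedType.Exports.
Local Open Scope ring_scope.

Set Implicit Arguments. Unset Strict Implicit. Unset Printing Implicit Defensive.

(** If some set of at most [c sqrt n] vertices induces a non-3-colourable graph,
   then so does a minimal such set [T]; every vertex of [T] has degree at least 3
   in [T], since a vertex with at most two neighbours could be coloured last.
   Hence [T], of size [t], spans at least [3t/2] edges, and a union bound over
   [T] and such an edge set bounds the failure probability by
   [sum_t C(n,t) C(t^2, 3t/2) p^(3t/2) <= sum_t (e^5 n^2 t p^3)^(t/2)].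
   For [t <= c sqrt n] and [p = n^-alpha] the base is at most
   [e^5 c n^(5/2 - 3 alpha)], which tends to 0 because [alpha > 5/6], so the
   geometric series does too. *)

Section SubsetWeights.
Variables (R : comPzRingType) (T : finType).
Implicit Types (A E F : {set T}) (p x y : R).

Definition subset_weight A p E : R := p ^+ #|E| * (1 - p) ^+ (#|A| - #|E|).

Lemma sum_powerset_prod_if A (f g : T -> R) :
  \sum_(E in powerset A) \prod_(e in A) (if e \in E then f e else g e)
  = \prod_(e in A) (f e + g e).
Proof.
have -> : \prod_(e in A) (f e + g e) =
    \prod_(e in A) \sum_(b : bool) (if b then f e else g e).
  by apply: eq_bigr => e _; rewrite big_bool /= addrC.
rewrite (big_distr_big false) /=.
rewrite (reindex (fun phi : {ffun T -> bool} => [set i | phi i])) /=; last first.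
  exists (fun E : {set T} => [ffun i => i \in E]) => [phi _|E _].
    by apply/ffunP => i; rewrite ffunE inE.
  by apply/setP => i; rewrite inE ffunE.
apply: eq_big => [phi|phi _]; last by apply: eq_bigr => i _; rewrite inE.
rewrite powersetE; apply/idP/idP => [/subsetP phiA|/pffun_onP [phiA _]].
  apply/pffun_onP; split => //; apply/subsetP => i; rewrite inE => phi_i.
  by apply: phiA; rewrite inE; case: (phi i) phi_i.
by apply/subsetP => i; rewrite inE => phi_i; apply: (subsetP phiA); rewrite inE phi_i.
Qed.

Lemma prod_if_mem A E x y : E \subset A ->
  \prod_(e in A) (if e \in E then x else y) = x ^+ #|E| * y ^+ (#|A| - #|E|).
Proof.
move=> EA; rewrite (bigID (mem E)) /=.
have -> : \prod_(e in A | e \in E) (if e \in E then x else y) = \prod_(e in A :&: E) x.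
  by apply: eq_big => [e|e /andP [_ ->]] //; rewrite in_setI.
have -> : \prod_(e in A | e \notin E) (if e \in E then x else y) = \prod_(e in A :\: E) y.
  by apply: eq_big => [e|e /andP [_ /negbTE ->]] //; rewrite in_setD andbC.
by rewrite !prodr_const cardsD (setIidPr EA).
Qed.

Lemma sum_subset_weight A p : \sum_(E in powerset A) subset_weight A p E = 1.
Proof.
transitivity (\sum_(E in powerset A) \prod_(e in A) (if e \in E then p else 1 - p)).
  by apply: eq_bigr => E; rewrite powersetE => EA; rewrite prod_if_mem.
by rewrite sum_powerset_prod_if big1 // => e _; rewrite addrC subrK.
Qed.

(* The weight of the supersets of F factors: elements of F are forced in, the others are free. *)
Lemma sum_subset_weight_supset A F p : F \subset A ->
  \sum_(E in powerset A) subset_weight A p E * (F \subset E)%:R = p ^+ #|F|.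
Proof.
move=> FA.
transitivity (\sum_(E in powerset A) \prod_(e in A)
    (if e \in E then p else if e \in F then 0 else 1 - p)).
  apply: eq_bigr => E; rewrite powersetE => EA; rewrite /subset_weight -prod_if_mem //.
  have [FE|/subsetPn [e eF eNE]] := boolP (F \subset E).
    rewrite mulr1; apply: eq_bigr => e _; case: ifP => // eNE.
    by rewrite ifN //; apply: contraFN eNE; apply: (subsetP FE).
  rewrite mulr0 (bigD1 e) /=; last by rewrite (subsetP FA).
  by rewrite (negbTE eNE) eF mul0r.
rewrite sum_powerset_prod_if.
have := prod_if_mem p 1 FA; rewrite expr1n mulr1 => <-.
by apply: eq_bigr => e _; case: ifP => _; rewrite ?addr0 // addrC subrK.
Qed.

End SubsetWeights.

Lemma subset_weight_ge0 (R : numDomainType) (T : finType) (A E : {set T}) (p : R) :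
  0 <= p <= 1 -> 0 <= subset_weight A p E.
Proof. by case/andP => p_ge0 p_le1; rewrite mulr_ge0 ?exprn_ge0 ?subr_ge0. Qed.

Lemma exists_subset_card (T : finType) (A : {set T}) k : (k <= #|A|)%N ->
  exists2 F : {set T}, F \subset A & #|F| = k.
Proof.
move=> kA; have : (0 < 'C(#|A|, k))%N by rewrite bin_gt0.
rewrite -cards_draws card_gt0 => /set0Pn [F].
by rewrite inE => /andP [FA /eqP cardF]; exists F.
Qed.

Lemma sum_set_by_card (R : nmodType) (T : finType) (Q : pred nat) (h : nat -> R) :
  \sum_(A : {set T} | Q #|A|) h #|A| = \sum_(t < #|T|.+1 | Q t) h t *+ 'C(#|T|, t).
Proof.
rewrite (partition_big (fun A : {set T} => inord #|A| : 'I_#|T|.+1) (fun t => Q t)) /=;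
  last by move=> A QA; rewrite inordK // ltnS max_card.
apply: eq_bigr => t Qt; rewrite -card_draws -sumr_const.
apply: eq_big => [A|A /andP [_ /eqP <-]]; last by rewrite inordK // ltnS max_card.
rewrite inE -(inj_eq val_inj) /= inordK ?ltnS ?max_card //.
by case: eqP => [->|]; rewrite ?Qt ?andbF.
Qed.

Lemma ffact_le_expn m k : (m ^_ k <= m ^ k)%N.
Proof.
have -> : (m ^ k = \prod_(i < k) m)%N by rewrite prod_nat_const card_ord.
by rewrite ffact_prod; apply: leq_prod => i _; exact: leq_subr.
Qed.

Section InducedSubgraphs.
Variable n : nat.
Implicit Types (S : {set 'I_n}) (u v w : 'I_n).

Definition pairs_in S := [set e in pairs n | e \subset S].

Lemma card_pairs_in S : (#|pairs_in S| <= #|S| * #|S|)%N.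
Proof.
rewrite -cardsX.
apply: leq_trans (leq_imset_card (fun x : 'I_n * 'I_n => [set x.1; x.2]) (setX S S)).
apply: subset_leq_card; apply/subsetP => e; rewrite !inE => /andP [/cards2P [u [v [_ ->]]] uvS].
apply/imsetP; exists (u, v) => //.
by rewrite !inE /= !(subsetP uvS) // !inE eqxx ?orbT.
Qed.

Lemma induced_3colorable0 (E : {set {set 'I_n}}) : induced_3colorable E set0.
Proof. by apply/existsP; exists [ffun=> ord0]; apply/forall_inP => u; rewrite inE. Qed.

Variable E : {set {set 'I_n}}.
Hypothesis E_pairs : E \subset pairs n.

Definition induced_degree S v := #|[set e in E :&: pairs_in S | v \in e]|.
Definition neighbours S v := [set u in S | [set u; v] \in E].

Lemma card_edge e : e \in E -> #|e| = 2%N.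
Proof. by move/(subsetP E_pairs); rewrite inE => /eqP. Qed.

Lemma neighbour_neq S u v : u \in neighbours S v -> u != v.
Proof.
rewrite inE => /andP [_]; apply: contraTneq => ->.
by rewrite setUid; apply/negP => /card_edge; rewrite cards1.
Qed.

Lemma card_neighbours_le S v : v \in S ->
  (#|neighbours S v| <= induced_degree S v)%N.
Proof.
move=> vS; rewrite -(@card_in_imset _ _ (fun u => [set u; v])); last first.
  move=> u w uN wN /setP /(_ u); rewrite !inE eqxx /= => /esym /orP [/eqP //|/eqP uv].
  by move: (neighbour_neq uN); rewrite uv eqxx.
apply: subset_leq_card; apply/subsetP => e /imsetP [u uN ->].
move: (uN); rewrite inE => /andP [uS uvE].
rewrite !inE uvE eqxx orbT andbT /=.
rewrite (card_edge uvE) eqxx /=.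
by apply/subsetP => w; rewrite !inE => /orP [] /eqP ->.
Qed.

Lemma induced_3colorable_extend S v : induced_3colorable E (S :\ v) ->
  (#|neighbours S v| < 3)%N -> induced_3colorable E S.
Proof.
move=> /existsP [f /forall_inP f_col] small_nb.
have [a aN] : exists a, a \notin f @: neighbours S v.
  apply/existsP; rewrite -negb_forall; apply: contraTN small_nb => /forallP all_used.
  rewrite -leqNgt -{1}(card_ord 3); apply: leq_trans (leq_imset_card f _).
  by apply: subset_leq_card; apply/subsetP => x _; exact: all_used.
apply/existsP; exists [ffun x => if x == v then a else f x].
apply/forall_inP => u uS; apply/forall_inP => w wS; apply/implyP => uwE; rewrite !ffunE.
case: (u =P v) => [uv | /eqP uv]; case: (w =P v) => [wv | /eqP wv]; subst.
- by move: uwE; rewrite setUid => /card_edge; rewrite cards1.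
- have wN : w \in neighbours S v by rewrite inE wS setUC.
  by apply: contraNneq aN => ->; rewrite imset_f.
- have uN : u \in neighbours S v by rewrite inE uS.
  by apply: contraNneq aN => <-; rewrite imset_f.
- have := f_col u; rewrite !inE uv uS => /(_ isT) /forall_inP /(_ w).
  by rewrite !inE wv wS => /(_ isT) /implyP; apply.
Qed.

Lemma sum_induced_degree S :
  (\sum_(v in S) induced_degree S v = 2 * #|E :&: pairs_in S|)%N.
Proof.
transitivity (\sum_(v in S) \sum_(e in E :&: pairs_in S) (v \in e : nat))%N.
  apply: eq_bigr => v _; rewrite /induced_degree -sum1_card big_mkcond [RHS]big_mkcond /=.
  by apply: eq_bigr => e _; rewrite inE; case: (e \in _); case: (v \in e).
rewrite exchange_big /= mulnC -sum_nat_const.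
apply: eq_bigr => e; rewrite !inE => /andP [eE /andP [_ eS]].
rewrite -(card_edge eE) -sum1_card big_mkcond [RHS]big_mkcond /=.
apply: eq_bigr => v _; case vE: (v \in e) => //=.
  by rewrite (subsetP eS).
by case: (v \in S).
Qed.

(* A minimal non-3-colourable subgraph has minimum degree at least 3. *)
Lemma not_induced_3colorable_dense S : ~~ induced_3colorable E S ->
  exists T : {set 'I_n},
    [/\ T \subset S, T != set0 & (3 * #|T| <= 2 * #|E :&: pairs_in T|)%N].
Proof.
move=> S_not_col.
have SS : (S \subset S) && ~~ induced_3colorable E S by rewrite subxx.
have [T /andP [TS T_not_col] T_min] :=
  @arg_minnP _ S (fun T => (T \subset S) && ~~ induced_3colorable E T) (fun T => #|T|) SS.
exists T; split => //; first by apply: contraNneq T_not_col => ->; exact: induced_3colorable0.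
rewrite -sum_induced_degree mulnC -sum_nat_const; apply: leq_sum => v vT.
apply: leq_trans (card_neighbours_le vT); rewrite leqNgt.
apply: contraNN T_not_col; apply: induced_3colorable_extend.
apply: contraT => Tv_not_col.
have := T_min (T :\ v); rewrite Tv_not_col (subset_trans (subsetDl T _) TS) => /(_ isT).
by rewrite (cardsD1 v T) vT ltnn.
Qed.

End InducedSubgraphs.

Section BinomialBounds.
Variable R : realType.
Local Notation e := (expR (1 : R)).

Lemma expR1_ge1 : 1 <= e.
Proof. by rewrite ltW // expR_gt1. Qed.

Lemma expn_le_expR_fact k : (k%:R : R) ^+ k <= e ^+ k * k`!%:R.
Proof.
case: k => [|k]; first by rewrite !expr0 mul1r.
have fact_gt0 : (0 : R) < k.+1`!%:R by rewrite ltr0n fact_gt0.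
rewrite -ler_pdivrMr // -expRM_natl mulr1.
apply: le_trans (expR_ge1Dxn k (ler0n R k.+1)).
by rewrite lerDr.
Qed.

Lemma bin_mul_expn_le m k : ('C(m, k)%:R : R) * k%:R ^+ k <= e ^+ k * m%:R ^+ k.
Proof.
apply: le_trans (ler_wpM2l (ler0n _ _) (expn_le_expR_fact k)) _.
rewrite mulrCA; apply: ler_wpM2l; first exact: exprn_ge0 (expR_ge0 _).
by rewrite -natrM bin_ffact -natrX ler_nat ffact_le_expn.
Qed.

Lemma bin_mul_exprn_le m t k (p : R) : (m <= t * k)%N -> 0 <= p ->
  'C(m, k)%:R * p ^+ k <= (e * t%:R * p) ^+ k.
Proof.
case: k => [|k] mtk p_ge0; first by rewrite !expr0 bin0 mulr1.
rewrite exprMn; apply: ler_wpM2r; first exact: exprn_ge0.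
rewrite -(@ler_pM2r _ (k.+1%:R ^+ k.+1)) ?exprn_gt0 ?ltr0n //.
apply: le_trans (bin_mul_expn_le m k.+1) _.
rewrite exprMn -mulrA -[t%:R ^+ _ * _]exprMn -natrM.
apply: ler_wpM2l; first exact: exprn_ge0 (expR_ge0 _).
by apply: lerXn2r; rewrite ?nnegrE ?ler0n // ler_nat.
Qed.

Lemma bin_sqr_mul_le n t (p : R) : 0 <= p ->
  'C(n, t)%:R ^+ 2 * (e * t%:R * p) ^+ (3 * t)
    <= (e ^+ 5 * n%:R ^+ 2 * t%:R * p ^+ 3) ^+ t.
Proof.
move=> p_ge0; set x := e * t%:R * p.
have x_ge0 : 0 <= x by rewrite !mulr_ge0 ?expR_ge0.
have tt_gt0 : (0 : R) < (t%:R ^+ t) ^+ 2.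
  by case: t {x x_ge0} => [|t]; rewrite ?expr0 ?expr1n ?ltr01 // !exprn_gt0 ?ltr0n.
rewrite -(ler_pM2r tt_gt0) mulrAC -[_ ^+ 2 * _]exprMn.
apply: le_trans (_ : (e ^+ t * n%:R ^+ t) ^+ 2 * x ^+ (3 * t) <= _).
  apply: ler_wpM2r; first exact: exprn_ge0.
  apply: lerXn2r; rewrite ?nnegrE ?mulr_ge0 ?exprn_ge0 ?ler0n ?expR_ge0 //.
  exact: bin_mul_expn_le.
have powE (a b : R) m : (a ^+ m) ^+ 2 * b ^+ (3 * m) = (a ^+ 2 * b ^+ 3) ^+ m.
  by rewrite exprMn -!exprM mulnC.
rewrite -exprMn powE (exprAC t%:R) -exprMn.
by rewrite le_eqVlt; apply/orP; left; apply/eqP; congr (_ ^+ t); rewrite /x; ring.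
Qed.

Lemma bin_term_le_sqrt n t k (p G : R) : (t <= n)%N -> (3 * t <= 2 * k)%N ->
  0 <= p -> e ^+ 5 * n%:R ^+ 2 * t%:R * p ^+ 3 <= G -> G <= 1 ->
  'C(n, t)%:R * (e * t%:R * p) ^+ k <= Num.sqrt G ^+ t.
Proof.
move=> tn tk p_ge0 G_ge G_le1.
set x := e * t%:R * p.
have x_ge0 : 0 <= x by rewrite !mulr_ge0 ?expR_ge0.
have G0_ge0 : 0 <= e ^+ 5 * n%:R ^+ 2 * t%:R * p ^+ 3.
  by rewrite !mulr_ge0 ?exprn_ge0 ?expR_ge0.
have x3_le : x ^+ 3 <= e ^+ 5 * n%:R ^+ 2 * t%:R * p ^+ 3.
  have -> : x ^+ 3 = e ^+ 3 * t%:R ^+ 2 * (t%:R * p ^+ 3) by rewrite /x; ring.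
  rewrite -[X in _ <= X]mulrA; apply: ler_wpM2r.
    by rewrite mulr_ge0 ?exprn_ge0.
  apply: ler_pM; rewrite ?exprn_ge0 ?expR_ge0 ?ler0n //.
    exact: (ler_weXn2l expR1_ge1 (isT : (3 <= 5)%N)).
  by apply: lerXn2r; rewrite ?nnegrE ?ler0n // ler_nat.
have x_le1 : x <= 1.
  rewrite -(expr_le1 (isT : (0 < 3)%N) x_ge0).
  by apply: le_trans G_le1; apply: le_trans G_ge.
have G_ge0 : 0 <= G by apply: le_trans G_ge.
rewrite -(ler_pXn2r (isT : (0 < 2)%N)) ?nnegrE ?mulr_ge0 ?exprn_ge0 ?ler0n ?sqrtr_ge0 //.
rewrite -exprM mulnC exprM sqr_sqrtr // exprMn -exprM.
apply: le_trans (_ : 'C(n, t)%:R ^+ 2 * x ^+ (3 * t) <= _).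
  apply: ler_wpM2l; first by rewrite exprn_ge0 ?ler0n.
  by apply: (ler_wiXn2l x_ge0 x_le1); rewrite (mulnC k).
apply: le_trans (bin_sqr_mul_le n t p_ge0) _.
by apply: lerXn2r.
Qed.

End BinomialBounds.

Lemma gnp_prob_compl (R : realType) n (p : R) (P : pred {set {set 'I_n}}) :
  1 - gnp_prob p P
  = \sum_(E in powerset (pairs n) | ~~ P E) subset_weight (pairs n) p E.
Proof.
rewrite -(sum_subset_weight (pairs n) p) (bigID P) /=.
by rewrite /gnp_prob addrAC subrr add0r.
Qed.

Lemma union_bound_supsets (R : numDomainType) (T I : finType) (A : {set T}) (p : R)
    (P : pred {set T}) (J : pred I) (F : I -> {set T}) :
  0 <= p <= 1 -> (forall i, J i -> F i \subset A) ->
  (forall E : {set T}, E \subset A -> ~~ P E -> exists2 i, J i & F i \subset E) ->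
  \sum_(E in powerset A | ~~ P E) subset_weight A p E <= \sum_(i | J i) p ^+ #|F i|.
Proof.
move=> p01 FA cover.
have w_ge0 (E : {set T}) : 0 <= subset_weight A p E by exact: subset_weight_ge0.
apply: le_trans (_ : _ <= \sum_(E in powerset A)
    subset_weight A p E * \sum_(i | J i) (F i \subset E)%:R) _.
  rewrite [X in _ <= X](bigID (fun E : {set T} => ~~ P E)) /= -[X in X <= _]addr0.
  apply: lerD; last by apply: sumr_ge0 => E _; rewrite mulr_ge0 ?sumr_ge0.
  apply: ler_sum => E /andP [EA notPE]; rewrite -{1}[subset_weight A p E]mulr1.
  apply: ler_wpM2l => //; move: EA; rewrite powersetE => /cover /(_ notPE) [i Ji FiE].
  by rewrite (bigD1 i) //= FiE lerDl sumr_ge0.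
under eq_bigr do rewrite big_distrr.
by rewrite exchange_big (eq_bigr _ (fun i Ji => sum_subset_weight_supset p (FA i Ji))).
Qed.

Lemma sum_pos_expr_le (R : realFieldType) (x : R) N : 0 <= x -> 2 * x <= 1 ->
  \sum_(t < N | (0 < t)%N) x ^+ t <= 2 * x.
Proof.
move=> x_ge0 x_le.
case: N => [|N]; first by rewrite big_ord0 mulr_ge0.
rewrite big_mkcond big_ord_recl /= add0r.
suff : \sum_(t < N) x ^+ t.+1 <= 2 * x - 2 * x ^+ N.+1.
  by move/le_trans; apply; rewrite lerBlDr lerDl mulr_ge0 ?exprn_ge0.
elim: N => [|N IH]; first by rewrite big_ord0 expr1 subrr.
have : 2 * x ^+ N.+2 <= x ^+ N.+1.
  by rewrite exprS mulrA; apply: ler_piMl; rewrite ?exprn_ge0.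
by rewrite big_ord_recr /=; lra.
Qed.

(* [(3t + 1) %/ 2] is the ceiling of [3t/2], the least number of edges on [t]
   vertices of minimum degree 3. *)
Definition edge_threshold t := ((3 * t).+1 %/ 2)%N.

Section SmallSubgraphs.
Variables (R : realType) (n : nat) (c : R).

Definition small_card t := (0 < t)%N && (t%:R <= c * Num.sqrt (n%:R : R)).

Definition dense_witness (S : {set 'I_n}) (F : {set {set 'I_n}}) :=
  (F \subset pairs_in S) && (#|F| == edge_threshold #|S|).

Lemma not_small_sets_3colorable_witness (E : {set {set 'I_n}}) :
  E \subset pairs n -> ~~ small_sets_3colorable c E ->
  exists2 SF : {set 'I_n} * {set {set 'I_n}},
    small_card #|SF.1| && dense_witness SF.1 SF.2 & SF.2 \subset E.
Proof.
move=> E_pairs /forallPn [S]; rewrite negb_imply => /andP [S_small S_not_col].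
case: (not_induced_3colorable_dense E_pairs S_not_col) => T [TS T_ne0 T_dense].
have [F FE cardF] : exists2 F : {set {set 'I_n}},
    F \subset E :&: pairs_in T & #|F| = edge_threshold #|T|.
  by apply: (@exists_subset_card _ (E :&: pairs_in T)); rewrite /edge_threshold; lia.
exists (T, F); last by apply: subset_trans FE (subsetIl _ _).
rewrite /small_card /dense_witness /= card_gt0 T_ne0 cardF eqxx (subset_trans FE) ?subsetIr //.
by rewrite !andbT /=; apply: le_trans S_small; rewrite ler_nat subset_leq_card.
Qed.

Lemma gnp_not_small_sets_3colorable_le_sum (p : R) : 0 <= p <= 1 ->
  1 - gnp_prob p (@small_sets_3colorable R c n)
  <= \sum_(S : {set 'I_n} | small_card #|S|) (expR 1 * #|S|%:R * p) ^+ edge_threshold #|S|.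
Proof.
move=> /[dup] p01 /andP [p_ge0 _].
rewrite gnp_prob_compl.
apply: le_trans (union_bound_supsets (F := snd) p01 _
    (@not_small_sets_3colorable_witness)) _.
  move=> SF /andP [_ /andP [SFpairs _]]; apply: subset_trans SFpairs _.
  by apply/subsetP => e; rewrite inE => /andP [].
rewrite -(pair_big_dep (fun S : {set 'I_n} => small_card #|S|) dense_witness
  (fun _ F => p ^+ #|F|)) /=.
apply: ler_sum => S /andP [S_gt0 _].
have -> : \sum_(F | dense_witness S F) p ^+ #|F|
    = 'C(#|pairs_in S|, edge_threshold #|S|)%:R * p ^+ edge_threshold #|S|.
  rewrite mulr_natl -cards_draws -sumr_const.
  by apply: eq_big => [F|F /andP [_ /eqP ->]] //; rewrite inE.
apply: bin_mul_exprn_le => //.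
apply: leq_trans (card_pairs_in S) _; rewrite leq_mul2l /edge_threshold; lia.
Qed.

Lemma sum_small_sets_le (p : R) : 0 <= p -> 0 <= c ->
  let G := expR 1 ^+ 5 * n%:R ^+ 2 * (c * Num.sqrt (n%:R : R)) * p ^+ 3 in
  4 * G <= 1 ->
  \sum_(S : {set 'I_n} | small_card #|S|) (expR 1 * #|S|%:R * p) ^+ edge_threshold #|S|
  <= 2 * Num.sqrt G.
Proof.
move=> p_ge0 c_ge0 G G_le.
have G_ge0 : 0 <= G by rewrite !mulr_ge0 ?exprn_ge0 ?expR_ge0 ?sqrtr_ge0.
have sqrtG_le : 2 * Num.sqrt G <= 1.
  rewrite -(ler_pXn2r (isT : (0 < 2)%N)) ?nnegrE ?mulr_ge0 ?sqrtr_ge0 //.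
  by rewrite exprMn sqr_sqrtr // expr1n; lra.
rewrite (@sum_set_by_card _ 'I_n small_card (fun t => (expR 1 * t%:R * p) ^+ edge_threshold t)).
apply: le_trans (sum_pos_expr_le #|'I_n|.+1 (sqrtr_ge0 G) sqrtG_le).
rewrite big_mkcond [X in _ <= X]big_mkcond; apply: ler_sum => t _.
rewrite /small_card; case: (0 < t)%N => //=; case: ifP => [t_le|_]; last exact: exprn_ge0.
rewrite -[_ *+ 'C(_, _)]mulr_natl; apply: bin_term_le_sqrt => //.
- by rewrite -ltnS.
- by rewrite /edge_threshold; lia.
- have -> : (#|'I_n|%:R : R) = n%:R by rewrite card_ord.
  rewrite /G; apply: ler_wpM2r; first exact: exprn_ge0.
  by apply: ler_wpM2l; rewrite ?mulr_ge0 ?exprn_ge0 ?expR_ge0.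
- by lra.
Qed.

Lemma gnp_not_small_sets_3colorable_le (p : R) : 0 <= p <= 1 -> 0 <= c ->
  let G := expR 1 ^+ 5 * n%:R ^+ 2 * (c * Num.sqrt (n%:R : R)) * p ^+ 3 in
  4 * G <= 1 -> 1 - gnp_prob p (@small_sets_3colorable R c n) <= 2 * Num.sqrt G.
Proof.
move=> /[dup] p01 /andP [p_ge0 _] c_ge0 G G_le.
apply: le_trans (gnp_not_small_sets_3colorable_le_sum p01) _.
exact: sum_small_sets_le.
Qed.

End SmallSubgraphs.

Lemma eventually_mul_powRN_lt (R : realType) (b K d : R) :
  0 < b -> 0 < K -> 0 < d -> \forall m \near \oo%classic, K * (m%:R : R) `^ (- b) < d.
Proof.
move=> b_gt0 K_gt0 d_gt0.
set Y := (d / K) `^ (- b^-1).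
have Y_gt0 : 0 < Y by rewrite powR_gt0 // divr_gt0.
have YbE : Y `^ b = K / d.
  rewrite /Y -powRrM mulNr mulVf ?gt_eqF // powR_inv1 ?invf_div //.
  by rewrite ltW // divr_gt0.
near=> m.
have Ym : Y < m%:R by near: m; exact: nbhs_infty_gtr.
have := gt0_ltr_powR b_gt0 (ltW Y_gt0) (ltW (lt_trans Y_gt0 Ym)) Ym.
rewrite YbE powRN -ltr_pdivlMl // mulrC -invf_div ltf_pV2 ?posrE ?divr_gt0 ?powR_gt0 //.
exact: lt_trans Y_gt0 Ym.
Unshelve. all: by end_near.
Qed.

Lemma small_sets_bound_powR (R : realType) (x alpha c : R) : 0 < x ->
  expR 1 ^+ 5 * x ^+ 2 * (c * Num.sqrt x) * (x `^ (- alpha)) ^+ 3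
  = expR 1 ^+ 5 * c * x `^ (- (3 * alpha - 5 / 2)).
Proof.
move=> x_gt0.
rewrite -(powR_mulrn 2 (ltW x_gt0)) -powR12_sqrt ?(ltW x_gt0) //.
rewrite -(powR_mulrn 3 (powR_ge0 _ _)) -powRrM.
have -> : x `^ (- (3 * alpha - 5 / 2)) = x `^ 2%:R * x `^ 2^-1 * x `^ (- alpha * 3%:R).
  rewrite -!powRD; try by rewrite (gt_eqF x_gt0) implybT.
  by congr (_ `^ _); field.
by ring.
Qed.

Local Open Scope classical_set_scope.
Local Open Scope ring_scope.
Unset Implicit Arguments.

Theorem mainTheorem1 (R : realType) (alpha c : R)
    (halpha : 5%:R / 6%:R < alpha) (hc : 0 < c) :
  (fun n : nat => gnp_prob (n%:R `^ (- alpha)) (@small_sets_3colorable R c n))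
    @ \oo --> (1 : R).
Proof.
set K := expR 1 ^+ 5 * c.
have K_gt0 : 0 < K by rewrite mulr_gt0 ?exprn_gt0 ?expR_gt0.
apply/cvgrPdist_lt => eps eps_gt0.
have d_gt0 : 0 < Num.min (4^-1) (eps ^+ 2 / 4).
  by rewrite lt_min; apply/andP; split; rewrite ?invr_gt0 ?divr_gt0 ?exprn_gt0.
near=> m.
have m_gt0 : (0 < m)%N by near: m; exact: nbhs_infty_gt.
have G_lt : K * m%:R `^ (- (3 * alpha - 5 / 2)) < Num.min (4^-1) (eps ^+ 2 / 4).
  by near: m; apply: eventually_mul_powRN_lt => //; lra.
move: G_lt; rewrite lt_min => /andP [G_le G_lt].
set p := m%:R `^ (- alpha).
have p01 : 0 <= p <= 1.
  rewrite powR_ge0 /p -[X in _ <= X](powRr0 m%:R).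
  by apply: ler_powR; rewrite ?ler1n //; lra.
have := gnp_not_small_sets_3colorable_le (n := m) p01 (ltW hc) => /=.
rewrite small_sets_bound_powR ?ltr0n // -/K => fail_le.
rewrite ger0_norm; last by rewrite gnp_prob_compl sumr_ge0 // => E _; exact: subset_weight_ge0.
apply: le_lt_trans (fail_le _) _; first lra.
have G_ge0 : 0 <= K * m%:R `^ (- (3 * alpha - 5 / 2)) by rewrite mulr_ge0 ?powR_ge0 ?ltW.
rewrite -(ltr_pXn2r (isT : (0 < 2)%N)) ?nnegrE ?mulr_ge0 ?sqrtr_ge0 ?ltW //.
by rewrite exprMn sqr_sqrtr //; lra.
Unshelve. all: by end_near.
Qed.
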